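(* Let $\ell\ge 0$ be an even integer. Let $S\subseteq D_{8\ell+6}\setminus\{e\}$ with $|S|=8\ell+4$ and let $x$ be the non-identity element of $D_{8\ell+6}$ not in $S$. If $x$ has order $(4\ell+3)/d$ for some $d\in\{3,5,7\}$, then $D_{8\ell+6}$ has an $S$-sequencing.
   Context: $D_{2m}=\langle u,v : u^m=e=v^2,\ vu=u^{m-1}v\rangle$ is the dihedral group of order $2m$. For $S\subseteq G\setminus\{e\}$ with $|S|=k$, an $S$-sequencing of $G$ is an ordering $(g_1,\dots,g_k)$ of the elements of $S$ such that the partial products $h_0=e$, $h_i=g_1\cdots g_i$ ($1\le i\le k$) are pairwise distinct. *)

From mathcomp Require Import all_boot all_fingroup all_solvable.
Set Implicit Arguments. Unset Strict Implicit. Unset Printing Implicit Defensive.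
Local Open Scope group_scope.

Definition partial_products (gT : finGroupType) (s : seq gT) : seq gT :=
  1 :: scanl mulg 1 s.

Definition is_S_sequencing (gT : finGroupType) (S : {set gT}) (s : seq gT) : Prop :=
  uniq s /\ [set x in s] = S /\ uniq (partial_products s).

Definition has_S_sequencing (gT : finGroupType) (S : {set gT}) : Prop :=
  exists s : seq gT, is_S_sequencing S s.

From mathcomp Require Import all_boot all_fingroup all_solvable.
From mathcomp Require Import zify.

(* Write l = 2q and m = 4l + 3 = 8q + 3, and let w be a rotation and v a reflection of
   D_2m.  As #[x] is odd, x is a rotation; since gcd(a, m) = d = m / #[x] for
   a = 2q, 2q + 2, 2q - 1 according as d = 3, 5, 7, the rotation w can be chosen to be
   a generator of the rotation subgroup with x = w^a, so that S = D_2m \ {1, w^a}.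
   If p_0, ..., p_{2m-2} are distinct elements whose quotients p_n^-1 p_{n+1} are
   distinct and differ from 1 and w^a, these quotients form an S-sequencing, because
   their partial products are the distinct elements p_0^-1 p_n.  Such paths are found
   on a ladder: one rail is a zigzag ordering of half the group, the other rail is
   its right translate by v, the rungs have quotient v, and the quotients along the
   two rails run over all elements other than 1 and v exactly once.  For each of the
   three values of a, the path follows the rails, crosses one rung and makes a few
   jumps whose quotients are those of rail edges it leaves out; the only quotient that
   is left out altogether is the one of a rail edge with quotient w^a. *)

Definition dcode := (bool * nat)%type.

(* [(false, i)] codes w^i and [(true, i)] codes w^-i v (see [decode]), and
   [dlabel m c1 c2] codes the quotient of the elements coded by c1 and c2
   (lemma [decode_label]). *)
Definition dlabel (m : nat) (c1 c2 : dcode) : dcode :=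
  if c1.1 == c2.1 then (false, if c1.2 <= c2.2 then c2.2 - c1.2 else m + c2.2 - c1.2)
  else (true, if c1.2 + c2.2 < m then c1.2 + c2.2 else c1.2 + c2.2 - m).

Lemma dlabel_lt m c1 c2 : c1.2 < m -> c2.2 < m -> (dlabel m c1 c2).2 < m.
Proof. by rewrite /dlabel; case: ifP => _ /=; case: ifP => /=; lia. Qed.

Definition rainbow_path (m a : nat) (p : nat -> dcode) : Prop :=
  [/\ forall n, n < (m.*2).-1 -> (p n).2 < m,
      uniq [seq p n | n <- iota 0 (m.*2).-1],
      uniq [seq dlabel m (p n) (p n.+1) | n <- iota 0 (m.*2).-2]
    & forall n, n < (m.*2).-2 ->
        dlabel m (p n) (p n.+1) \notin [:: (false, 0); (false, a)]].

(* Right multiplication by v. *)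
Definition flip (m : nat) (c : dcode) : dcode := (~~ c.1, if c.2 == 0 then 0 else m - c.2).

Definition rail (q t : nat) : dcode :=
  let j := t %/ 4 in
  match t %% 4 with
  | 0 => (false, if j == 0 then 0 else 8*q+3 - j)
  | 1 => (true, 4*q+1 - j)
  | 2 => (true, 4*q+1 + j + 1)
  | _ => (false, j.+1)
  end.

Definition ladder (q : nat) (s : bool) (t : nat) : dcode :=
  if s then flip (8*q+3) (rail q t) else rail q t.

Definition rail_label (q : nat) (s : bool) (t : nat) : dcode :=
  dlabel (8*q+3) (ladder q s t) (ladder q s t.+1).

Ltac case_ifs := repeat match goal with
  | |- context [if ?b then _ else _] => let H := fresh "H" in destruct b eqn:H
  | H0 : context [if ?b then _ else _] |- _ => let H := fresh "H" in destruct b eqn:H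
  end.

Ltac eqb_to_eq := repeat match goal with
  | H : (_ == _) = true |- _ => move/eqP: H => H
  | H : (_ == _) = false |- _ => move/eqP: H => H
  end.

Ltac solve_code := solve [ done | f_equal; lia | exfalso; lia ].

Ltac case_code := case_ifs; simpl in *; eqb_to_eq.

Ltac solve_ifs := case_code; solve_code.

Lemma ladderE q s t j r : t = 4*j + r -> r < 4 -> ladder q s t =
  let c := match r with
   | 0 => (false, if j == 0 then 0 else 8*q+3 - j)
   | 1 => (true, 4*q+1 - j)
   | 2 => (true, 4*q+1 + j + 1)
   | _ => (false, j.+1) end in
  if s then flip (8*q+3) c else c.
Proof.
move=> -> r4; rewrite /ladder /rail.
have -> : (4*j + r) %/ 4 = j by lia.
have -> : (4*j + r) %% 4 = r by lia.
by case: r r4 => [|[|[|[|]]]].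
Qed.

Lemma ladder_lt q s t : t <= 8*q+2 -> (ladder q s t).2 < 8*q+3.
Proof.
case: (edivnP t 4) => j r -> /= r4 tm; rewrite (@ladderE q s _ j r) //; last by lia.
by case: s; case: r r4 tm => [|[|[|[|]]]] //= _ tm; case_ifs => /=; lia.
Qed.

Definition on_rail (q : nat) (c : dcode) : bool :=
  if c.1 then (2*q < c.2) && (c.2 <= 6*q+2) else (c.2 <= 2*q) || (6*q+2 < c.2).

Definition rail_index (q : nat) (c : dcode) : nat :=
  if c.1 then (if c.2 <= 4*q+1 then 4*(4*q+1 - c.2) + 1 else 4*(c.2 - 4*q - 2) + 2)
  else if c.2 == 0 then 0 else if c.2 <= 2*q then 4*(c.2 - 1) + 3 else 4*(8*q+3 - c.2).

Definition ladder_index (q : nat) (c : dcode) : bool * nat :=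
  if on_rail q c then (false, rail_index q c) else (true, rail_index q (flip (8*q+3) c)).

Lemma ladderK q s t : t <= 8*q+2 -> ladder_index q (ladder q s t) = (s, t).
Proof.
case: (edivnP t 4) => j r -> /= r4 tm; rewrite (@ladderE q s _ j r) //; last by lia.
rewrite /ladder_index /on_rail /rail_index /flip.
by case: s; case: r r4 tm => [|[|[|[|]]]] //= _ tm; solve_ifs.
Qed.

Definition label_index (q : nat) (c : dcode) : nat :=
  if c.1 then (if c.2 <= 4*q+1 then 2*(4*q+1 - c.2) else 2*(c.2 - 4*q - 1) - 2)
  else (if c.2 <= 4*q+1 then 2*c.2 - 1 else 2*(8*q+3 - c.2) - 1).

Definition rail_label_index (q : nat) (c : dcode) : bool * nat :=
  if c.2 %% 2 == 1 then (false, label_index q c)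
  else (true, label_index q (c.1, if c.2 == 0 then 0 else 8*q+3 - c.2)).

Lemma rail_labelK q s t : t < 8*q+2 ->
  [/\ rail_label_index q (rail_label q s t) = (s, t),
      0 < (rail_label q s t).2 & (rail_label q s t).2 < 8*q+3].
Proof.
case: (edivnP t 4) => j r -> /= r4; rewrite /rail_label.
have [-> tm | r3 tm] := eqVneq r 3.
  rewrite (@ladderE q s (j*4 + 3) j 3) ?(@ladderE q s (j*4 + 3).+1 j.+1 0) //; try lia.
  rewrite /rail_label_index /label_index /dlabel /flip.
  by case: s; case_code; (split; [solve_code | lia | lia]).
rewrite (@ladderE q s (j*4 + r) j r) ?(@ladderE q s (j*4 + r).+1 j r.+1) //; try lia.
rewrite /rail_label_index /label_index /dlabel /flip.
by case: s; case: r r4 r3 tm => [|[|[|[|]]]] //= _ _ tm; case_code;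
  (split; [solve_code | lia | lia]).
Qed.

Definition walk (q : nat) (route : nat -> bool * nat) (n : nat) : dcode :=
  ladder q (route n).1 (route n).2.

Definition valid_edge (q : nat) (e : option (bool * nat)) : bool :=
  if e is Some (_, t) then t < 8*q+2 else true.

(* [Some (s, t)] is the rail edge from t to t + 1 on rail s, and [None] is a rung. *)
Definition edge_label (q : nat) (e : option (bool * nat)) : dcode :=
  if e is Some (s, t) then rail_label q s t else (true, 0).

Lemma edge_label_inj q e1 e2 : valid_edge q e1 -> valid_edge q e2 ->
  edge_label q e1 = edge_label q e2 -> e1 = e2.
Proof.
case: e1 => [[s1 t1]|]; case: e2 => [[s2 t2]|] //= h1 h2.
- have [K1 _ _] := rail_labelK q s1 t1 h1; have [K2 _ _] := rail_labelK q s2 t2 h2.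
  by move=> E; move: K1; rewrite E K2 => ->.
- by have [_ + _] := rail_labelK q s1 t1 h1 => /[swap] ->.
- by have [_ + _] := rail_labelK q s2 t2 h2 => /[swap] <-.
Qed.

Lemma edge_label_neq0 q e : valid_edge q e -> edge_label q e != (false, 0).
Proof.
case: e => [[s t]|] //= h; have [_ + _] := rail_labelK q s t h.
by apply: contraTneq => ->.
Qed.

Lemma walk_rainbow q route edge s0 t0 a :
  (forall n, n < 16*q+5 -> (route n).2 <= 8*q+2) ->
  (forall n1 n2, n1 < 16*q+5 -> n2 < 16*q+5 -> route n1 = route n2 -> n1 = n2) ->
  (forall n, n < 16*q+4 ->
     dlabel (8*q+3) (walk q route n) (walk q route n.+1) = edge_label q (edge n)) ->
  (forall n, n < 16*q+4 -> valid_edge q (edge n) && (edge n != Some (s0, t0))) ->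
  (forall n1 n2, n1 < 16*q+4 -> n2 < 16*q+4 -> edge n1 = edge n2 -> n1 = n2) ->
  t0 < 8*q+2 -> rail_label q s0 t0 = (false, a) ->
  rainbow_path (8*q+3) a (walk q route).
Proof.
move=> route_le route_inj walkE edge_ok edge_inj t0_lt skip_label; rewrite /rainbow_path.
have -> : ((8*q+3).*2).-1 = 16*q+5 by lia.
have -> : (16*q+5).-1 = 16*q+4 by lia.
have valid n : n < 16*q+4 -> valid_edge q (edge n) by move/edge_ok/andP=> [].
split.
- by move=> n /route_le; apply: ladder_lt.
- rewrite map_inj_in_uniq ?iota_uniq // => n1 n2; rewrite !mem_iota /= => h1 h2 E.
  apply: route_inj => //; move: E (route_le _ h1) (route_le _ h2); rewrite /walk.
  case: (route n1) (route n2) => [s1 t1] [s2 t2] /= E.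
  by move=> /(ladderK q s1) <- /(ladderK q s2) <-; rewrite E.
- rewrite map_inj_in_uniq ?iota_uniq // => n1 n2; rewrite !mem_iota /= => h1 h2.
  by rewrite !walkE // => /edge_label_inj E; apply: edge_inj => //; apply: E; apply: valid.
- move=> n hn; rewrite walkE // !inE negb_or edge_label_neq0 ?valid //=.
  rewrite -skip_label -[rail_label _ _ _]/(edge_label q (Some (s0, t0))).
  have /andP[_] := edge_ok n hn; apply: contraNneq => /edge_label_inj -> //.
  exact: valid.
Qed.

Lemma rung_label q s t : t <= 8*q+2 ->
  dlabel (8*q+3) (ladder q s t) (ladder q (~~ s) t) = (true, 0).
Proof.
move=> /(ladder_lt q false); rewrite /dlabel /ladder /flip.
by case: s (rail q t) => [] [[] i] /= ?; solve_ifs.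
Qed.

Ltac injection_lia := let E := fresh "E" in move=> E; inversion E; lia.

Definition route3 q n : bool * nat :=
  if n <= 4*q then (false, n) else if n <= 8*q+3 then (true, n - 1)
  else if n <= 12*q+3 then (true, n - (8*q+4)) else (false, n - (8*q+3)).

Definition route3_edge q n : option (bool * nat) :=
  if n < 4*q then Some (false, n) else if n == 4*q then None
  else if n < 8*q+3 then Some (true, n-1) else if n == 8*q+3 then Some (false, 4*q)
  else if n < 12*q+3 then Some (true, n - (8*q+4)) else if n == 12*q+3 then Some (false, 8*q+1)
  else Some (false, n - (8*q+3)).

Lemma route3_label q n : 1 <= q -> n < 16*q+4 ->
  dlabel (8*q+3) (walk q (route3 q) n) (walk q (route3 q) n.+1) =
  edge_label q (route3_edge q n).
Proof.
move=> hq hn; rewrite /walk.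
case: (eqVneq n (4*q)) => [->|n1].
  have -> : route3 q (4*q) = (false, 4*q) by rewrite /route3; solve_ifs.
  have -> : route3 q (4*q).+1 = (true, 4*q) by rewrite /route3; solve_ifs.
  have -> : route3_edge q (4*q) = None by rewrite /route3_edge; solve_ifs.
  by apply: (rung_label q false) => /=; lia.
case: (eqVneq n (8*q+3)) => [->|n2].
  have -> : route3 q (8*q+3) = (true, 8*q+2) by rewrite /route3; solve_ifs.
  have -> : route3 q (8*q+3).+1 = (true, 0) by rewrite /route3; solve_ifs.
  have -> : route3_edge q (8*q+3) = Some (false, 4*q) by rewrite /route3_edge; solve_ifs.
  cbn [fst snd edge_label]; rewrite /rail_label (@ladderE q true (8*q+2) (2*q) 2) //
    ?(@ladderE q true 0 0 0) // ?(@ladderE q false (4*q) q 0) //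
    ?(@ladderE q false (4*q).+1 q 1) //; try lia.
  rewrite /dlabel /flip /=; solve_ifs.
case: (eqVneq n (12*q+3)) => [->|n3].
  have -> : route3 q (12*q+3) = (true, 4*q-1) by rewrite /route3; solve_ifs.
  have -> : route3 q (12*q+3).+1 = (false, 4*q+1) by rewrite /route3; solve_ifs.
  have -> : route3_edge q (12*q+3) = Some (false, 8*q+1) by rewrite /route3_edge; solve_ifs.
  cbn [fst snd edge_label]; rewrite /rail_label (@ladderE q true (4*q-1) (q-1) 3) //
    ?(@ladderE q false (4*q+1) q 1) // ?(@ladderE q false (8*q+1) (2*q) 1) //
    ?(@ladderE q false (8*q+1).+1 (2*q) 2) //; try lia.
  rewrite /dlabel /flip /=; solve_ifs.
rewrite /route3 /route3_edge; case_ifs; eqb_to_eq; try (exfalso; lia);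
  cbn [fst snd edge_label]; rewrite /rail_label; congr dlabel; congr ladder; lia.
Qed.

Lemma route3_rainbow q : 1 <= q -> rainbow_path (8*q+3) (2*q) (walk q (route3 q)).
Proof.
move=> hq; apply: (@walk_rainbow q (route3 q) (route3_edge q) true (4*q-1)).
- by move=> n hn; rewrite /route3; case_ifs => /=; lia.
- by move=> n1 n2 h1 h2; rewrite /route3; case_ifs; injection_lia.
- by move=> n; apply: route3_label.
- move=> n hn; rewrite /route3_edge; case_ifs; eqb_to_eq => //=;
    by rewrite ?andbT ?(inj_eq Some_inj) ?xpair_eqE ?eqxx //=; lia.
- by move=> n1 n2 h1 h2; rewrite /route3_edge; case_ifs; eqb_to_eq; injection_lia.
- lia.
- rewrite /rail_label (@ladderE q true (4*q-1) (q-1) 3) ?(@ladderE q true (4*q-1).+1 q 0); try lia.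
  rewrite /dlabel /flip /=; solve_ifs.
Qed.

Definition route5 q n : bool * nat :=
  if n <= 1 then (true, 4*q+2+n)
  else if n <= 4*q+1 then (false, n + 4*q+1)
  else if n <= 8*q+3 then (true, n - (4*q+2))
  else if n <= 12*q+2 then (true, n - 4*q)
  else (false, n - (12*q+3)).

Definition route5_edge q n : option (bool * nat) :=
  if n == 0 then Some (true, 4*q+2)
  else if n == 1 then None
  else if n <= 4*q then Some (false, n + 4*q+1)
  else if n == 4*q+1 then Some (false, 4*q+1)
  else if n <= 8*q+2 then Some (true, n - (4*q+2))
  else if n == 8*q+3 then Some (false, 4*q+2)
  else if n <= 12*q+1 then Some (true, n - 4*q)
  else if n == 12*q+2 then Some (true, 4*q+1)
  else Some (false, n - (12*q+3)).

Lemma route5_label q n : 1 <= q -> n < 16*q+4 ->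
  dlabel (8*q+3) (walk q (route5 q) n) (walk q (route5 q) n.+1) =
  edge_label q (route5_edge q n).
Proof.
move=> hq hn; rewrite /walk.
case: (eqVneq n 1) => [->|n1].
  have -> : route5 q 1 = (true, 4*q+3) by rewrite /route5; solve_ifs.
  have -> : route5 q 2 = (false, 4*q+3) by rewrite /route5; solve_ifs.
  have -> : route5_edge q 1 = None by rewrite /route5_edge; solve_ifs.
  by apply: (rung_label q true) => /=; lia.
case: (eqVneq n (4*q+1)) => [->|n2].
  have -> : route5 q (4*q+1) = (false, 8*q+2) by rewrite /route5; solve_ifs.
  have -> : route5 q (4*q+1).+1 = (true, 0) by rewrite /route5; solve_ifs.
  have -> : route5_edge q (4*q+1) = Some (false, 4*q+1) by rewrite /route5_edge; solve_ifs.
  cbn [fst snd edge_label]; rewrite /rail_label (@ladderE q false (8*q+2) (2*q) 2) //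
    ?(@ladderE q true 0 0 0) // ?(@ladderE q false (4*q+1) q 1) //
    ?(@ladderE q false (4*q+1).+1 q 2) //; try lia.
  rewrite /dlabel /flip /=; solve_ifs.
case: (eqVneq n (8*q+3)) => [->|n3].
  have -> : route5 q (8*q+3) = (true, 4*q+1) by rewrite /route5; solve_ifs.
  have -> : route5 q (8*q+3).+1 = (true, 4*q+4) by rewrite /route5; solve_ifs.
  have -> : route5_edge q (8*q+3) = Some (false, 4*q+2) by rewrite /route5_edge; solve_ifs.
  cbn [fst snd edge_label]; rewrite /rail_label (@ladderE q true (4*q+1) q 1) //
    ?(@ladderE q true (4*q+4) (q+1) 0) // ?(@ladderE q false (4*q+2) q 2) //
    ?(@ladderE q false (4*q+2).+1 q 3) //; try lia.
  rewrite /dlabel /flip /=; solve_ifs.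
case: (eqVneq n (12*q+2)) => [->|n4].
  have -> : route5 q (12*q+2) = (true, 8*q+2) by rewrite /route5; solve_ifs.
  have -> : route5 q (12*q+2).+1 = (false, 0) by rewrite /route5; solve_ifs.
  have -> : route5_edge q (12*q+2) = Some (true, 4*q+1) by rewrite /route5_edge; solve_ifs.
  cbn [fst snd edge_label]; rewrite /rail_label (@ladderE q true (8*q+2) (2*q) 2) //
    ?(@ladderE q false 0 0 0) // ?(@ladderE q true (4*q+1) q 1) //
    ?(@ladderE q true (4*q+1).+1 q 2) //; try lia.
  rewrite /dlabel /flip /=; solve_ifs.
rewrite /route5 /route5_edge; case_ifs; eqb_to_eq; try (exfalso; lia);
  cbn [fst snd edge_label]; rewrite /rail_label; congr dlabel; congr ladder; lia.
Qed.

Lemma route5_rainbow q : 1 <= q -> rainbow_path (8*q+3) (2*q+2) (walk q (route5 q)).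
Proof.
move=> hq; apply: (@walk_rainbow q (route5 q) (route5_edge q) true (4*q+3)).
- by move=> n hn; rewrite /route5; case_ifs => /=; lia.
- by move=> n1 n2 h1 h2; rewrite /route5; case_ifs; injection_lia.
- by move=> n; apply: route5_label.
- move=> n hn; rewrite /route5_edge; case_ifs; eqb_to_eq => //=;
    by rewrite ?andbT ?(inj_eq Some_inj) ?xpair_eqE ?eqxx //=; lia.
- by move=> n1 n2 h1 h2; rewrite /route5_edge; case_ifs; eqb_to_eq; injection_lia.
- lia.
- rewrite /rail_label (@ladderE q true (4*q+3) q 3) ?(@ladderE q true (4*q+3).+1 (q+1) 0); try lia.
  rewrite /dlabel /flip /=; solve_ifs.
Qed.

Definition route7 q n : bool * nat :=
  if n == 0 then (true, 0)
  else if n <= 4*q-2 then (false, n - 1)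
  else if n == 4*q-1 then (false, 4*q-1)
  else if n == 4*q then (false, 4*q-2)
  else if n <= 8*q+2 then (false, n)
  else (true, n - (8*q+2)).

Definition route7_edge q n : option (bool * nat) :=
  if n == 0 then None
  else if n <= 4*q-3 then Some (false, n-1)
  else if n == 4*q-2 then Some (true, 0)
  else if n == 4*q-1 then Some (false, 4*q-2)
  else if n == 4*q then Some (false, 4*q-1)
  else if n <= 8*q+1 then Some (false, n)
  else if n == 8*q+2 then Some (false, 4*q)
  else Some (true, n - (8*q+2)).

Lemma route7_label q n : 2 <= q -> n < 16*q+4 ->
  dlabel (8*q+3) (walk q (route7 q) n) (walk q (route7 q) n.+1) =
  edge_label q (route7_edge q n).
Proof.
move=> hq hn; rewrite /walk.
case: (eqVneq n 0) => [->|n0].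
  have -> : route7 q 0 = (true, 0) by rewrite /route7; solve_ifs.
  have -> : route7 q 1 = (false, 0) by rewrite /route7; solve_ifs.
  have -> : route7_edge q 0 = None by rewrite /route7_edge; solve_ifs.
  by apply: (rung_label q true) => /=; lia.
case: (eqVneq n (4*q-2)) => [->|n1].
  have -> : route7 q (4*q-2) = (false, 4*q-3) by rewrite /route7; solve_ifs.
  have -> : route7 q (4*q-2).+1 = (false, 4*q-1) by rewrite /route7; solve_ifs.
  have -> : route7_edge q (4*q-2) = Some (true, 0) by rewrite /route7_edge; solve_ifs.
  cbn [fst snd edge_label]; rewrite /rail_label (@ladderE q false (4*q-3) (q-1) 1) //
    ?(@ladderE q false (4*q-1) (q-1) 3) // ?(@ladderE q true 0 0 0) //
    ?(@ladderE q true 1 0 1) //; try lia.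
  rewrite /dlabel /flip /=; solve_ifs.
case: (eqVneq n (4*q-1)) => [->|n2].
  have -> : route7 q (4*q-1) = (false, 4*q-1) by rewrite /route7; solve_ifs.
  have -> : route7 q (4*q-1).+1 = (false, 4*q-2) by rewrite /route7; solve_ifs.
  have -> : route7_edge q (4*q-1) = Some (false, 4*q-2) by rewrite /route7_edge; solve_ifs.
  cbn [fst snd edge_label]; rewrite /rail_label (@ladderE q false (4*q-1) (q-1) 3) //
    ?(@ladderE q false (4*q-2) (q-1) 2) // ?(@ladderE q false (4*q-2).+1 (q-1) 3) //; try lia.
  rewrite /dlabel /flip /=; solve_ifs.
case: (eqVneq n (4*q)) => [->|n3].
  have -> : route7 q (4*q) = (false, 4*q-2) by rewrite /route7; solve_ifs.
  have -> : route7 q (4*q).+1 = (false, 4*q+1) by rewrite /route7; solve_ifs.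
  have -> : route7_edge q (4*q) = Some (false, 4*q-1) by rewrite /route7_edge; solve_ifs.
  cbn [fst snd edge_label]; rewrite /rail_label (@ladderE q false (4*q-2) (q-1) 2) //
    ?(@ladderE q false (4*q+1) q 1) // ?(@ladderE q false (4*q-1) (q-1) 3) //
    ?(@ladderE q false (4*q-1).+1 q 0) //; try lia.
  rewrite /dlabel /flip /=; solve_ifs.
case: (eqVneq n (8*q+2)) => [->|n4].
  have -> : route7 q (8*q+2) = (false, 8*q+2) by rewrite /route7; solve_ifs.
  have -> : route7 q (8*q+2).+1 = (true, 1) by rewrite /route7; solve_ifs.
  have -> : route7_edge q (8*q+2) = Some (false, 4*q) by rewrite /route7_edge; solve_ifs.
  cbn [fst snd edge_label]; rewrite /rail_label (@ladderE q false (8*q+2) (2*q) 2) //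
    ?(@ladderE q true 1 0 1) // ?(@ladderE q false (4*q) q 0) //
    ?(@ladderE q false (4*q).+1 q 1) //; try lia.
  rewrite /dlabel /flip /=; solve_ifs.
rewrite /route7 /route7_edge; case_ifs; eqb_to_eq; try (exfalso; lia);
  cbn [fst snd edge_label]; rewrite /rail_label; congr dlabel; congr ladder; lia.
Qed.

Lemma route7_rainbow q : 2 <= q -> rainbow_path (8*q+3) (2*q-1) (walk q (route7 q)).
Proof.
move=> hq; apply: (@walk_rainbow q (route7 q) (route7_edge q) false (4*q-3)).
- by move=> n hn; rewrite /route7; case_ifs; eqb_to_eq => /=; lia.
- by move=> n1 n2 h1 h2; rewrite /route7; case_ifs; eqb_to_eq; injection_lia.
- by move=> n; apply: route7_label.
- move=> n hn; rewrite /route7_edge; case_ifs; eqb_to_eq => //=;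
    by rewrite ?andbT ?(inj_eq Some_inj) ?xpair_eqE ?eqxx //=; lia.
- by move=> n1 n2 h1 h2; rewrite /route7_edge; case_ifs; eqb_to_eq; injection_lia.
- lia.
- rewrite /rail_label (@ladderE q false (4*q-3) (q-1) 1)
    ?(@ladderE q false (4*q-3).+1 (q-1) 2); try lia.
  rewrite /dlabel /flip /=; solve_ifs.
Qed.

Lemma coprime_quarter a n : 4 * a + 1 = n \/ 4 * a = n + 1 -> coprime a n.
Proof.
case=> [<- | E]; first by rewrite /coprime gcdnMDl gcdn1.
have [c ac] : exists c, a = c.+1 by exists a.-1; lia.
by rewrite (_ : n = 3 * a + c) /coprime ?gcdnMDl ac -/(coprime _ _) ?coprimeSn //; lia.
Qed.

Lemma coprime_lift n d k : prime d -> coprime k n ->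
  exists2 t, coprime t (n * d) & t = k %[mod n].
Proof.
move=> pd kn; have [dk | dNk] := boolP (d %| k); last first.
  by exists k; rewrite // coprimeMr kn coprime_sym prime_coprime.
exists (k + n); last by rewrite modnDr.
rewrite coprimeMr -coprime_modl modnDr coprime_modl kn coprime_sym prime_coprime //=.
rewrite dvdn_addr //; apply: contraTN kn => dn.
rewrite /coprime; apply: contraTneq (prime_gt1 pd) => g1.
by rewrite -leqNgt dvdn_leq // -g1 dvdn_gcd dk.
Qed.

Lemma exists_coprime_mulmod n d a b :
  prime d -> 1 < n -> 0 < a -> coprime a n -> coprime b n ->
  exists2 t, coprime t (n * d) & t * (a * d) = b * d %[mod n * d].
Proof.
move=> pd n_gt1 a_gt0 an bn.
case: (@egcdnP a n a_gt0); rewrite (eqP an) => u k uaE _.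
have u_inv : u * a = 1 %[mod n] by rewrite uaE modnMDl.
have un : coprime u n.
  have u_gt0 : 0 < u by case: u uaE {u_inv} => //=; lia.
  by apply: modn_coprime u_gt0 _; exists a; rewrite u_inv modn_small.
have [|t tnd tE] := @coprime_lift n d (u * b) pd; first by rewrite coprimeMl un.
exists t => //; rewrite !mulnA -!muln_modl; congr (_ * _).
by rewrite -modnMml tE modnMml mulnAC -modnMml u_inv modnMml mul1n.
Qed.

Lemma exists_rainbow_path q n d : d \in [:: 3; 5; 7] -> n * d = 8*q+3 -> 1 < n ->
  exists2 a, [/\ 0 < a, a < n & coprime a n] & exists p, rainbow_path (8*q+3) (a * d) p.
Proof.
rewrite !inE => /or3P[] /eqP -> nd n_gt1.
- exists ((n - 1) %/ 4); first by split; [| |apply: coprime_quarter]; lia.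
  by rewrite (_ : _ * 3 = 2 * q); [exists (walk q (route3 q)); apply: route3_rainbow | ]; lia.
- exists ((n + 1) %/ 4); first by split; [| |apply: coprime_quarter]; lia.
  by rewrite (_ : _ * 5 = 2 * q + 2); [exists (walk q (route5 q)); apply: route5_rainbow | ]; lia.
- exists ((n - 1) %/ 4); first by split; [| |apply: coprime_quarter]; lia.
  by rewrite (_ : _ * 7 = 2 * q - 1); [exists (walk q (route7 q)); apply: route7_rainbow | ]; lia.
Qed.

Local Open Scope group_scope.

Definition decode {gT : finGroupType} (w v : gT) (c : dcode) : gT :=
  if c.1 then (w ^+ c.2)^-1 * v else w ^+ c.2.

Lemma scanl_telescope (gT : finGroupType) (f : nat -> gT) K k c :
  scanl *%g c [seq (f n)^-1 * f n.+1 | n <- iota k K] =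
  [seq c * (f k)^-1 * f n | n <- iota k.+1 K].
Proof.
elim: K k c => [|K IH] k c //=.
rewrite IH; congr (_ :: _); first by rewrite mulgA.
by apply: eq_map => n; rewrite !mulgA mulgK.
Qed.

Lemma partial_products_telescope (gT : finGroupType) (f : nat -> gT) K :
  partial_products [seq (f n)^-1 * f n.+1 | n <- iota 0 K] =
  [seq (f 0)^-1 * f n | n <- iota 0 K.+1].
Proof.
rewrite /partial_products scanl_telescope /= mulVg.
by congr (_ :: _); apply: eq_map => n; rewrite mul1g.
Qed.

Lemma setC2_card (T : finType) (S : {set T}) (x y : T) :
  x != y -> x \notin S -> y \notin S -> #|S| = #|T| - 2 -> S = ~: [set x; y].
Proof.
move=> xy xS yS cardS; apply/eqP.
rewrite eqEcard [#|~: _|]cardsCs setCK cards2 xy cardS leqnn andbT.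
apply/subsetP => z zS; rewrite !inE; apply/norP.
by split; [move: xS | move: yS]; apply: contraNneq => <-.
Qed.

Section DihedralCoding.

Variables (gT : finGroupType) (w v : gT) (m : nat).
Hypotheses (ow : #[w] = m) (v2 : v * v = 1) (wv : w ^ v = w^-1).
Local Notation dec := (decode w v).

Lemma expg_sub_order k : m <= k -> w ^+ k = w ^+ (k - m).
Proof. by move=> mk; rewrite -{1}(subnKC mk) expgD -ow expg_order mul1g. Qed.

Lemma invg_expgM i j : i < m -> j < m ->
  (w ^+ i)^-1 * w ^+ j = w ^+ (if i <= j then j - i else m + j - i).
Proof.
move=> im jm; case: leqP => ij; first by rewrite -{1}(subnKC ij) expgD mulKg.
have wj : w ^+ j = w ^+ i * w ^+ (m + j - i).
  by rewrite -expgD subnKC ?(expg_sub_order (m + j)) ?leq_addr ?addKn //; lia.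
by rewrite wj mulKg.
Qed.

Lemma decode_label c1 c2 : c1.2 < m -> c2.2 < m ->
  (dec c1)^-1 * dec c2 = dec (dlabel m c1 c2).
Proof.
have conj_expg k : (w ^+ k) ^ v = (w ^+ k)^-1 by rewrite conjXg wv expgVn.
case: c1 => [[] i]; case: c2 => [[] j] /= im jm; rewrite /decode /dlabel /=.
- have -> : ((w ^+ i)^-1 * v)^-1 * ((w ^+ j)^-1 * v) = (w ^+ i * (w ^+ j)^-1) ^ v.
    by rewrite invMg invgK conjgE !mulgA.
  by rewrite conjMg conjVg !conj_expg invgK invg_expgM.
- have -> : ((w ^+ i)^-1 * v)^-1 * w ^+ j = (w ^+ (i + j)) ^ v * v.
    by rewrite invMg invgK conjgE expgD -!mulgA v2 mulg1.
  rewrite conj_expg.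
  by case: ifP => // /negbT; rewrite -leqNgt => /expg_sub_order ->.
- rewrite mulgA -invMg -expgD addnC.
  by case: ifP => // /negbT; rewrite -leqNgt => /expg_sub_order ->.
- exact: invg_expgM.
Qed.

Hypothesis vNw : v \notin <[w]>.

Lemma decode_inj : {in [pred c : dcode | c.2 < m] &, injective dec}.
Proof.
have expg_inj i j : i < m -> j < m -> w ^+ i = w ^+ j -> i = j.
  by move=> im jm /eqP; rewrite eq_expg_mod_order ow !modn_small // => /eqP.
case=> [[] i] [[] j]; rewrite !inE /decode /= => im jm.
- by move/mulIg/invg_inj/expg_inj ->.
- move=> E; case/negP: vNw.
  by rewrite -[v](mulKVg (w ^+ i)) E -expgD mem_cycle.
- move=> E; case/negP: vNw.
  by rewrite -[v](mulKVg (w ^+ j)) -E -expgD mem_cycle.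
- by move/expg_inj ->.
Qed.

Lemma rainbow_path_sequencing a p : #|gT| = m.*2 -> 0 < a < m ->
  rainbow_path m a p -> has_S_sequencing (~: [set 1; w ^+ a]).
Proof.
move=> oG /andP[a_gt0 a_lt] [p_lt p_uniq L_uniq L_new].
set N := (m.*2).-1; set L := fun n => dlabel m (p n) (p n.+1).
have L_lt n : n < N.-1 -> (L n).2 < m by move=> nN; apply: dlabel_lt; apply: p_lt; lia.
have p_in n : n \in iota 0 N -> p n \in [pred c : dcode | c.2 < m].
  by rewrite mem_iota inE => /andP[_ nN]; apply: p_lt.
set s := [seq (dec (p n))^-1 * dec (p n.+1) | n <- iota 0 N.-1].
have sE : s = map dec (map L (iota 0 N.-1)).
  rewrite -map_comp; apply/eq_in_map => n; rewrite mem_iota => /andP[_ nN] /=.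
  by rewrite decode_label //; apply: p_lt; lia.
have s_uniq : uniq s.
  rewrite sE map_inj_in_uniq // => _ _ /mapP[n1 + ->] /mapP[n2 + ->].
  by rewrite !mem_iota => h1 h2; apply: decode_inj; rewrite inE L_lt.
have s_sub : {subset s <= ~: [set 1; w ^+ a]}.
  rewrite sE => _ /mapP[_ /mapP[n + ->] ->]; rewrite mem_iota => /andP[_ nN].
  have dec_neq c : c.2 < m -> L n != c -> dec (L n) != dec c.
    by move=> cm; apply: contra_neq => /decode_inj; apply; rewrite inE ?L_lt.
  have := L_new n nN; rewrite !inE negb_or => /andP[L0 La].
  apply/norP; split; [apply: (dec_neq (false, 0)) | apply: (dec_neq (false, a))] => //=; lia.
exists s; split => //; split.
  apply/eqP; rewrite eqEcard; apply/andP; split; first by apply/subsetP => y; rewrite inE => /s_sub.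
  rewrite [#|[set _ in s]|]cardsE (card_uniqP s_uniq) size_map size_iota cardsCs setCK cards2 oG.
  rewrite eq_sym -[1](expg0 w) eq_expg_mod_order ow !modn_small //=; lia.
rewrite partial_products_telescope prednK; last by lia.
rewrite (_ : [seq _ | n <- _] = map ( *%g (dec (p 0))^-1) (map dec (map p (iota 0 N)))).
  rewrite map_inj_uniq; last exact: mulgI.
  by rewrite map_inj_in_uniq // => _ _ /mapP[n1 /p_in + ->] /mapP[n2 /p_in + ->]; apply: decode_inj.
by rewrite -!map_comp.
Qed.

End DihedralCoding.

Lemma dihedral_rotation_reflection n m : n = m.*2 -> 1 < m ->
  exists u v : 'D_n, [/\ #[u] = m, v \notin <[u]>, v * v = 1,
    {in <[u]>, forall z, z ^ v = z^-1} & {in ~: <[u]>, forall z, z * z = 1}].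
Proof.
move=> -> m_gt1; set G := 'D_(m.*2).
have oG : #|G| = m.*2 by rewrite card_dihedral.
case/(isoGrpP _ (Grp_dihedral m_gt1)): (isog_refl G) => _.
case/existsP=> -[u v] /= /eqP[defG um v2 uv].
have {}defG : <[u]> * <[v]> = G by rewrite -norm_joinEr // norms_cycle uv groupV cycle_id.
have vNu : v \notin <[u]>.
  apply/negP => vu; have ou_dvd : #[u] %| m by rewrite order_dvdn um.
  have : #|G| <= m by rewrite -defG mulGSid ?cycle_subG //; exact: dvdn_leq (ltnW m_gt1) ou_dvd.
  by rewrite oG -addnn; lia.
have ov : #[v] = 2 by apply: nt_prime_order v2 (group1_contra vNu).
have ou : #[u] = m.
  have : #|G| = (#[u] * #[v])%N.
    by rewrite -defG TI_cardMg // setIC prime_TIg ?cycle_subG // -orderE ov.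
  by rewrite oG ov; lia.
have uv_inv z : z \in <[u]> -> z ^ v = z^-1 by case/cycleP=> k ->; rewrite conjXg uv expgVn.
exists u, v; split => //.
move=> z; rewrite inE => zNu; have : z \in <[u]> * <[v]> by rewrite defG inE.
case/mulsgP=> y b yu; rewrite cycle2g // !inE => /pred2P[-> | ->] zE.
  by rewrite zE mulg1 yu in zNu.
have vV : v^-1 = v by apply/eqP; rewrite eq_invg_mul -expg2 v2.
by rewrite zE -mulgA -{1}vV -conjgE uv_inv // mulgV.
Qed.

Lemma odd_order_mem_cycle (gT : finGroupType) (u x : gT) :
  {in ~: <[u]>, forall z, z * z = 1} -> odd #[x] -> x \in <[u]>.
Proof.
move=> sq1 ox; apply: contraT => xNu.
have x2 : #[x] %| 2 by rewrite order_dvdn expgS expg1 sq1 // inE.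
have /eqP : #[x] = 1%N by move: (@dvdn_leq _ 2 isT x2) (order_gt0 x) ox; case: #[x] => [|[|[|]]].
by rewrite order_eq1 => /eqP x1; rewrite x1 group1 in xNu.
Qed.

Lemma exists_generator_expg (gT : finGroupType) (u x : gT) (n d a : nat) :
  prime d -> 1 < n -> #[u] = (n * d)%N -> x \in <[u]> -> #[x] = n -> 0 < a -> coprime a n ->
  exists2 w, <[w]> = <[u]> & w ^+ (a * d)%N = x.
Proof.
move=> pd n_gt1 ou /cycleP[i ->] ox a_gt0 an.
have d_gt0 : 0 < d by apply: prime_gt0.
have gi : gcdn (n * d)%N i = d.
  move: ox; rewrite orderXgcd ou => ox; have g_dvd := dvdn_gcdl (n * d)%N i.
  by apply/eqP; rewrite -(eqn_pmul2l (ltnW n_gt1)) -{1}ox divnK.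
have [b ib] : exists b, i = (b * d)%N by apply/dvdnP; rewrite -gi dvdn_gcdr.
have bn : coprime b n by rewrite /coprime gcdnC -(eqn_pmul2r d_gt0) muln_gcdl -ib gi mul1n.
have [t tnd tE] := @exists_coprime_mulmod n d a b pd n_gt1 a_gt0 an bn.
exists (u ^+ t); first by apply/esym/eqP; move: tnd; rewrite coprime_sym -ou -generator_coprime.
by apply/eqP; rewrite -expgM eq_expg_mod_order ou tE ib.
Qed.

Theorem corollary5p13 (l : nat) (S : {set 'D_(8 * l + 6)}) (x : 'D_(8 * l + 6)) :
  ~~ odd l ->
  1 \notin S ->
  #|S| = 8 * l + 4 ->
  x != 1 -> x \notin S ->
  (exists2 d : nat, d \in [:: 3; 5; 7] & (#[x] * d)%N = 4 * l + 3) ->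
  has_S_sequencing S.
Proof.
move=> l_even S1 cardS x1 Sx [d d357 oxd].
have [q lq] : exists q, l = q.*2.
  by exists l./2; rewrite -[l in LHS]odd_double_half (negbTE l_even).
have nm : (8 * l + 6 = (8 * q + 3).*2)%N by lia.
have oxd' : (#[x] * d = 8 * q + 3)%N by lia.
have cardS' : #|S| = ((8 * q + 3).*2 - 2)%N by rewrite cardS; lia.
have m_gt1 : (1 < 8 * q + 3)%N by lia.
have pd : prime d by move: d357; rewrite !inE => /or3P[] /eqP ->.
have oG : #|('D_(8 * l + 6))%type| = (8 * q + 3).*2 by rewrite -cardsT nm card_dihedral.
have [u [v [ou vNu v2 conj_inv sq1]]] := @dihedral_rotation_reflection _ _ nm m_gt1.
have ox_gt1 : (1 < #[x])%N by rewrite ltn_neqAle order_gt0 eq_sym order_eq1 x1.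
have ox_odd : odd #[x] by have := congr1 odd oxd'; rewrite oddM oddD oddM /= => /andP[].
have xu : x \in <[u]> := @odd_order_mem_cycle _ u x sq1 ox_odd.
have [a [a_gt0 a_lt a_cop] [p p_rainbow]] := @exists_rainbow_path q _ d d357 oxd' ox_gt1.
have [w wu wx] :=
  @exists_generator_expg _ u x _ d a pd ox_gt1 (etrans ou (esym oxd')) xu erefl a_gt0 a_cop.
have ow : #[w] = (8 * q + 3)%N by rewrite orderE wu -orderE ou.
have wv : w ^ v = w^-1 by rewrite conj_inv // -wu cycle_id.
have -> : S = ~: [set 1; w ^+ (a * d)%N].
  by rewrite wx; apply: setC2_card; rewrite // ?oG // eq_sym.
apply: (@rainbow_path_sequencing _ w v _ ow v2 wv _ _ p oG _ p_rainbow); first by rewrite wu.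
by rewrite -oxd' ltn_pmul2r ?muln_gt0 ?a_gt0 ?prime_gt0.
Qed.
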